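(* In Setting S, let $E$ be as there. If $H^0(X,\widetilde E(p,q))\ne0$ for $(p,q)\in\mathbb Z^2$, then \[ q\ge j^0_1+\dots+j^r_1\quad\text{and}\quad p+a_rq\ge i^0_1+\dots+i^s_1+a_rj^0_1+(a_r-a_1)j^1_1+\dots+(a_r-a_{r-1})j^{r-1}_1 . \] That is, $\mathrm{supp}(\Gamma E)$ is contained in the set $L_E$ of such $(p,q)$.
   Context: Setting S. Fix integers $s,r\ge1$ and $0\le a_1\le\dots\le a_r$. $X=\mathbb P(\mathcal O_{\mathbb P^s}\oplus\mathcal O_{\mathbb P^s}(a_1)\oplus\dots\oplus\mathcal O_{\mathbb P^s}(a_r))$ is the smooth complete toric variety of dimension $s+r$ with $N=\mathbb Z^{s+r}$ (basis $e_1,\dots,e_s,f_1,\dots,f_r$), character lattice $M=\mathbb Z^{s+r}$, and rays $\rho_0=\mathrm{cone}(-e_1-\dots-e_s+a_1f_1+\dots+a_rf_r)$, $\rho_i=\mathrm{cone}(e_i)$ $(1\le i\le s)$, $\eta_0=\mathrm{cone}(-f_1-\dots-f_r)$, $\eta_j=\mathrm{cone}(f_j)$ $(1\le j\le r)$; the maximal cones are spanned by all rays but one $\rho_i$ and one $\eta_j$. For $m=(d_1,\dots,d_{s+r})\in M$: $\langle m,n(\rho_0)\rangle=-d_1-\dots-d_s+a_1d_{s+1}+\dots+a_rd_{s+r}$, $\langle m,n(\rho_i)\rangle=d_i$, $\langle m,n(\eta_0)\rangle=-(d_{s+1}+\dots+d_{s+r})$, $\langle m,n(\eta_j)\rangle=d_{s+j}$.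 The Cox ring is $R=\mathbb C[x_0,\dots,x_s,y_0,\dots,y_r]$, $\mathbb Z^{s+r+2}$-graded (finest grading) and $\mathrm{Cl}(X)\cong\mathbb Z^2$-graded by $\deg x_i=(1,0)$, $\deg y_0=(0,1)$, $\deg y_j=(-a_j,1)$; $(p,q)$ corresponds to $p[D_{\rho_0}]+q[D_{\eta_0}]$. $E$ is a finitely generated $\mathbb Z^{s+r+2}$-graded reflexive $R$-module of rank $\ell$, $\widetilde E$ its (equivariant) sheaf on $X$, $\widetilde E(p,q)$ the sheaf of the shift $E(p,q)$ ($E(p,q)_\alpha=E_{\alpha+(p,q)}$), $\Gamma E=\bigoplus_{(p,q)}H^0(X,\widetilde E(p,q))$, $\mathrm{supp}(\Gamma E)=\{(p,q):H^0(X,\widetilde E(p,q))\neq0\}$, $h_{\Gamma E}(p,q)=\dim H^0(X,\widetilde E(p,q))$. Klyachko filtrations: for a ray $\tau$ let $x^{\hat\tau}$ be the product of the variables of all rays other than $\tau$; the pieces of $E_{x^{\hat\tau}}$ of degree $\phi(m)=(\langle m,n(\tau')\rangle)_{\tau'}$ embed compatibly into a fixed $\mathbf E\cong\mathbb C^\ell$, and the image depends only on $i=\langle m,n(\tau)\rangle$; it is denoted $E^\tau(i)$, an increasing filtration of $\mathbb C^\ell$. For $\tau=\rho_t$ ($0\le t\le s$) write integers $i^t_1\le\dots\le i^t_\ell$ and subspaces $0\ne F^t_1\subseteq\dots\subseteq F^t_\ell=\mathbb C^\ell$ with $E^{\rho_t}(i)=0$ for $i<i^t_1$, $=F^t_n$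 for $i^t_n\le i<i^t_{n+1}$, $=\mathbb C^\ell$ for $i\ge i^t_\ell$, and $i^t_n=i^t_{n+1}$ iff $F^t_n=F^t_{n+1}$; similarly for $\tau=\eta_u$ ($0\le u\le r$) with integers $j^u_n$ and subspaces $G^u_n$. Set $i^t_{\ell+1}=j^u_{\ell+1}=+\infty$. Known fact (Klyachko): $H^0(X,\widetilde E(p,q))=\bigoplus_{m\in M}H^0(X,\widetilde E(p,q))_m$ (torus weights) with $H^0(X,\widetilde E(p,q))_m\cong E^{\rho_0}(\langle m,n(\rho_0)\rangle+p)\cap\bigcap_{i=1}^sE^{\rho_i}(\langle m,n(\rho_i)\rangle)\cap E^{\eta_0}(\langle m,n(\eta_0)\rangle+q)\cap\bigcap_{j=1}^rE^{\eta_j}(\langle m,n(\eta_j)\rangle)$. *)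

From HB Require Import structures.
From mathcomp Require Import all_boot all_order all_algebra.
From mathcomp Require Import complex reals.
Set Implicit Arguments. Unset Strict Implicit. Unset Printing Implicit Defensive.
Import Order.TTheory GRing.Theory Num.Theory.
Local Open Scope ring_scope.

Notation CC R := (complex.complex (Num.RealClosedField.clone R _)) (only parsing).

(* A Klyachko filtration of C^ell: an increasing Z-indexed family of subspaces
   (row spaces of ell x ell matrices), equal to 0 for i << 0 and to C^ell
   for i >> 0. *)
Definition klyachko_filtration (K : fieldType) (ell : nat) (E : int -> 'M[K]_ell) : Prop :=
  [/\ forall i : int, (E i <= E (i + 1)%R)%MS,
      exists i0 : int, forall i : int, i <= i0 -> E i == 0
    & exists i1 : int, forall i : int, i1 <= i -> (1%:M <= E i)%MS].

Definition first_jump (K : fieldType) (ell : nat) (E : int -> 'M[K]_ell) (i : int) : Prop :=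
  E i != 0 /\ E (i - 1) == 0.

(* Rays: rho_t (t = 0..s) with filtrations Erho t, eta_u (u = 0..r)
   with filtrations Eeta u.  Characters m = (d_1..d_s, d_{s+1}..d_{s+r}) are
   encoded as d : nat -> int (used on 1..s) and e : nat -> int (e j = d_{s+j},
   used on 1..r).  The weight-m piece of H^0(X, E~(p,q)) via Klyachko's formula: *)
Definition H0_weight (K : fieldType) (ell s r : nat) (a : nat -> nat)
    (Erho Eeta : nat -> int -> 'M[K]_ell) (p q : int) (d e : nat -> int) : 'M[K]_ell :=
  let m_rho0 := - (\sum_(1 <= i < s.+1) d i) + \sum_(1 <= j < r.+1) (a j)%:Z * e j in
  let m_eta0 := - (\sum_(1 <= j < r.+1) e j) in
  (Erho 0%N (m_rho0 + p)%R
   :&: (\bigcap_(1 <= i < s.+1) Erho i (d i))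
   :&: Eeta 0%N (m_eta0 + q)%R
   :&: (\bigcap_(1 <= j < r.+1) Eeta j (e j)))%MS.

(* H^0(X, E~(p,q)) = (+)_m H^0(X,E~(p,q))_m, so it is nonzero iff some
   weight piece is nonzero; (p,q) \in supp(Gamma E) iff this holds. *)
Definition in_supp_GammaE (K : fieldType) (ell s r : nat) (a : nat -> nat)
    (Erho Eeta : nat -> int -> 'M[K]_ell) (p q : int) : Prop :=
  exists d e : nat -> int, H0_weight s r a Erho Eeta p q d e != 0.

From HB Require Import structures.
From mathcomp Require Import all_boot all_order all_algebra.
From mathcomp Require Import complex reals.
From mathcomp Require Import zify ring.
Set Implicit Arguments. Unset Strict Implicit. Unset Printing Implicit Defensive.
Import Order.TTheory GRing.Theory Num.Theory.
Local Open Scope ring_scope.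

(* A nonzero weight space of H^0(X, E~(p,q)) is a nonzero intersection of
   filtration pieces, so every piece in it is nonzero and its index is at
   least the first jump of the corresponding filtration.  This gives one
   lower bound per ray on the pairings <m, n(rho)>; the character m is then
   eliminated by summing the eta-bounds (for q) and by weighting them with
   a_r - a_j >= 0, which is where monotonicity of the a_j enters (for p). *)

Section MatrixSpaces.

Variables (K : fieldType) (n : nat).

Lemma capmx_neq0 (A B : 'M[K]_n) : (A :&: B)%MS != 0 -> A != 0 /\ B != 0.
Proof.
move=> AB_neq0; split; apply: contraNneq AB_neq0 => A0; rewrite -submx0 -A0.
  exact: capmxSl.
exact: capmxSr.
Qed.

Lemma bigcapmx_nat_neq0 (A : nat -> 'M[K]_n) (m k i : nat) :
  (m <= i < k)%N -> (\bigcap_(m <= j < k) A j)%MS != 0 -> A i != 0.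
Proof.
move=> mik; apply: contraNneq => Ai0; rewrite -submx0 -Ai0.
by rewrite (big_rem i) ?mem_index_iota //= capmxSl.
Qed.

Lemma filtration_homo (E : int -> 'M[K]_n) :
  (forall i, (E i <= E (i + 1)%R)%MS) -> forall i j, i <= j -> (E i <= E j)%MS.
Proof.
move=> E_incr i j; rewrite -subr_ge0 => /gez0_abs ji; rewrite -(subrKC i j) -ji.
elim: `|j - i|%N => [|l IHl]; first by rewrite addr0.
by apply: submx_trans IHl _; rewrite -addn1 PoszD addrA.
Qed.

Lemma klyachko_first_jump_le (E : int -> 'M[K]_n) (i k : int) :
  klyachko_filtration E -> first_jump E i -> E k != 0 -> i <= k.
Proof.
move=> [E_incr _ _] [_ /eqP Ei0] Ek_neq0; rewrite leNgt; apply: contraNN Ek_neq0.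
rewrite -(subrK 1 i) ltzD1 => /(filtration_homo E_incr).
by rewrite Ei0 submx0.
Qed.

End MatrixSpaces.

Lemma sumr_gap_to_last (R : pzRingType) (w f : nat -> R) (r : nat) : (1 <= r)%N ->
  \sum_(1 <= j < r) (w r - w j) * f j
  = w r * \sum_(1 <= j < r.+1) f j - \sum_(1 <= j < r.+1) w j * f j.
Proof.
move=> r_gt0; rewrite mulr_sumr -sumrB big_nat_recr //= subrr addr0.
by apply: eq_bigr => j _; rewrite mulrBl.
Qed.

Section WeightBounds.

Variables (K : fieldType) (ell s r : nat) (a : nat -> nat).
Variables (Erho Eeta : nat -> int -> 'M[K]_ell) (irho jeta : nat -> int).

Hypothesis Erho_filtration : forall t, (t <= s)%N -> klyachko_filtration (Erho t).
Hypothesis Eeta_filtration : forall u, (u <= r)%N -> klyachko_filtration (Eeta u).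
Hypothesis irho_first_jump : forall t, (t <= s)%N -> first_jump (Erho t) (irho t).
Hypothesis jeta_first_jump : forall u, (u <= r)%N -> first_jump (Eeta u) (jeta u).

Variables (p q : int) (d e : nat -> int).
Hypothesis weight_neq0 : H0_weight s r a Erho Eeta p q d e != 0.

Lemma H0_weight_first_jump_le :
  [/\ irho 0%N <= - (\sum_(1 <= i < s.+1) d i) + \sum_(1 <= j < r.+1) (a j)%:Z * e j + p,
      forall i, (1 <= i < s.+1)%N -> irho i <= d i,
      jeta 0%N <= - (\sum_(1 <= j < r.+1) e j) + q
    & forall j, (1 <= j < r.+1)%N -> jeta j <= e j].
Proof.
have [/capmx_neq0[/capmx_neq0[Erho0 Erho_d] Eeta0] Eeta_e] := capmx_neq0 weight_neq0.
split.
- exact: klyachko_first_jump_le (Erho_filtration _) (irho_first_jump _) Erho0.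
- move=> i i_range; have /andP[_ i_le_s] := i_range.
  apply: klyachko_first_jump_le (Erho_filtration i_le_s) (irho_first_jump i_le_s) _.
  exact: bigcapmx_nat_neq0 i_range Erho_d.
- exact: klyachko_first_jump_le (Eeta_filtration _) (jeta_first_jump _) Eeta0.
- move=> j j_range; have /andP[_ j_le_r] := j_range.
  apply: klyachko_first_jump_le (Eeta_filtration j_le_r) (jeta_first_jump j_le_r) _.
  exact: bigcapmx_nat_neq0 j_range Eeta_e.
Qed.

Lemma H0_weight_q_ge : \sum_(0 <= u < r.+1) jeta u <= q.
Proof.
have [_ _ jeta0_le jeta_le] := H0_weight_first_jump_le.
rewrite big_ltn //; apply: le_trans (lerD jeta0_le (ler_sum_nat jeta_le)) _.
by rewrite addrC addNKr.
Qed.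

Hypothesis a_incr : forall j, (1 <= j)%N -> (j < r)%N -> (a j <= a j.+1)%N.
Hypothesis r_gt0 : (1 <= r)%N.

Lemma a_le_last j : (1 <= j <= r)%N -> (a j <= a r)%N.
Proof.
move=> j_range; apply: (homo_leq_in (D := [pred k | 1 <= k <= r]%N) (r := leq)) => //.
- exact: leq_trans.
- by move=> k l; rewrite !inE => ? ? m; rewrite inE; lia.
- by move=> k; rewrite !inE => /andP[k_gt0 _] /andP[_ k_lt_r]; apply: a_incr.
- by rewrite inE r_gt0 leqnn.
- by case/andP: j_range.
Qed.

Lemma H0_weight_pq_ge :
  \sum_(0 <= t < s.+1) irho t + (a r)%:Z * jeta 0%N
    + \sum_(1 <= j < r) ((a r)%:Z - (a j)%:Z) * jeta j <= p + (a r)%:Z * q.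
Proof.
have [irho0_le irho_le jeta0_le jeta_le] := H0_weight_first_jump_le.
have sum_irho := ler_sum_nat irho_le.
have ar_jeta0 : (a r)%:Z * jeta 0%N <= (a r)%:Z * (- (\sum_(1 <= j < r.+1) e j) + q).
  exact: ler_wpM2l.
have gap_jeta : \sum_(1 <= j < r) ((a r)%:Z - (a j)%:Z) * jeta j
                <= \sum_(1 <= j < r) ((a r)%:Z - (a j)%:Z) * e j.
  apply: ler_sum_nat => j /andP[j_gt0 j_lt_r]; apply: ler_wpM2l.
    by rewrite subr_ge0 lez_nat a_le_last // j_gt0 ltnW.
  by rewrite jeta_le // j_gt0 ltnS ltnW.
rewrite (sumr_gap_to_last (fun j => (a j)%:Z) e) // in gap_jeta.
rewrite big_ltn //; apply: le_trans (lerD (lerD (lerD irho0_le sum_irho) ar_jeta0) gap_jeta) _.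
by rewrite le_eqVlt; apply/predU1P; left; ring.
Qed.

End WeightBounds.

Theorem mainTheorem6 (R : realType) (s r ell : nat) (a : nat -> nat)
    (Erho Eeta : nat -> int -> 'M[CC R]_ell)
    (irho jeta : nat -> int) (p q : int) :
  (1 <= s)%N -> (1 <= r)%N -> (1 <= ell)%N ->
  (forall j : nat, (1 <= j)%N -> (j < r)%N -> (a j <= a j.+1)%N) ->
  (forall t : nat, (t <= s)%N -> klyachko_filtration (Erho t)) ->
  (forall u : nat, (u <= r)%N -> klyachko_filtration (Eeta u)) ->
  (forall t : nat, (t <= s)%N -> first_jump (Erho t) (irho t)) ->
  (forall u : nat, (u <= r)%N -> first_jump (Eeta u) (jeta u)) ->
  in_supp_GammaE s r a Erho Eeta p q ->
  q >= \sum_(0 <= u < r.+1) jeta u /\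
  p + (a r)%:Z * q >= \sum_(0 <= t < s.+1) irho t + (a r)%:Z * jeta 0%N
                       + \sum_(1 <= j < r) ((a r)%:Z - (a j)%:Z) * jeta j.
Proof.
move=> _ r_gt0 _ a_incr Erho_filt Eeta_filt irho_jump jeta_jump [d [e weight_neq0]].
split.
- by have := H0_weight_q_ge Erho_filt Eeta_filt irho_jump jeta_jump weight_neq0.
- by have := H0_weight_pq_ge Erho_filt Eeta_filt irho_jump jeta_jump weight_neq0 a_incr r_gt0.
Qed.
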